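(* For $c\in\mathbb{R}$, $\Omega_0^M\cap\kappa^{-1}(c)\neq\varnothing$ if and only if $c<-14$.
   Context: $\kappa(x,y,z)=-x^2-y^2+z^2+xyz-2$ on $\mathbb{R}^3$, and $\Omega_0^M=\{(x,y,z)\in\mathbb{R}^3: z<-2,\ xy+z>2\}$ (equivalently $z<-2$ and $\bar z<-2$ where $\bar z=-xy-z$). *)

From Stdlib Require Import Reals.
Open Scope R_scope.

Definition kappa (x y z : R) : R := - x^2 - y^2 + z^2 + x*y*z - 2.

Definition Omega0M (x y z : R) : Prop := z < -2 /\ x*y + z > 2.

From Stdlib Require Import Reals Lra Psatz.
Open Scope R_scope.

(* With [a = -2 - z] and [b = xy + z - 2], both positive exactly on [Omega0M],
   [kappa = -14 - (x - y)^2 - ab - 4a - 4b]: this gives [kappa < -14] on the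
   region, and along the diagonal [x = y = sqrt(2(u+2))], [z = -(u+2)] one has
   [a = b = u], so [kappa = -14 - u(u+8)] sweeps out all of [(-oo, -14)]. *)

Lemma kappa_shifted (x y z : R) :
  kappa x y z =
  -14 - (x - y)^2 - (-2 - z) * (x*y + z - 2) - 4 * (-2 - z) - 4 * (x*y + z - 2).
Proof. unfold kappa; ring. Qed.

Lemma kappa_lt_on_Omega0M (x y z : R) : Omega0M x y z -> kappa x y z < -14.
Proof.
  intros [Hz Hxyz].
  rewrite kappa_shifted.
  assert (Hab : 0 < (-2 - z) * (x*y + z - 2)) by (apply Rmult_lt_0_compat; lra).
  assert (Hsq : 0 <= (x - y)^2) by apply pow2_ge_0.
  lra.
Qed.

Lemma Omega0M_diagonal (u : R) : 0 < u ->
  let t := sqrt (2 * (u + 2)) in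
  Omega0M t t (-(u + 2)) /\ kappa t t (-(u + 2)) = -14 - u * (u + 8).
Proof.
  intros Hu t.
  assert (Ht : t * t = 2 * (u + 2)) by (apply sqrt_sqrt; lra).
  split.
  - unfold Omega0M; lra.
  - rewrite kappa_shifted.
    rewrite Ht. ring.
Qed.

Lemma diagonal_parameter (c : R) : c < -14 ->
  exists u : R, 0 < u /\ -14 - u * (u + 8) = c.
Proof.
  intros Hc.
  exists (sqrt (2 - c) - 4).
  assert (Hsq : sqrt (2 - c) * sqrt (2 - c) = 2 - c) by (apply sqrt_sqrt; lra).
  assert (H4 : 4 < sqrt (2 - c)).
  { rewrite <- (sqrt_square 4) by lra. apply sqrt_lt_1; lra. }
  split; nra.
Qed.

Theorem mainTheorem3 (c : R) :
  (exists x y z : R, Omega0M x y z /\ kappa x y z = c) <-> c < -14.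
Proof.
  split.
  - intros (x & y & z & HO & <-). exact (kappa_lt_on_Omega0M x y z HO).
  - intros Hc.
    destruct (diagonal_parameter c Hc) as (u & Hu & <-).
    destruct (Omega0M_diagonal u Hu) as [HO Hk].
    eexists _, _, _. split; [exact HO | exact Hk].
Qed.
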